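(* Let $F\subset\mathbb R^d$ be a closed set such that $\partial\operatorname{conv}F$ contains no rays. Then $\operatorname{cl}\operatorname{conv}F=\operatorname{conv}F$.
   Context: $\operatorname{conv}$ denotes convex hull and $\operatorname{cl}$ closure. A ray is a set $\{x+te: t\ge0\}$ with $x\in\mathbb R^d$, $e\ne0$. *)

From HB Require Import structures.
From mathcomp Require Import all_boot all_order all_algebra.
From mathcomp Require Import all_classical all_reals all_analysis.
Set Implicit Arguments. Unset Strict Implicit. Unset Printing Implicit Defensive.
Import Order.TTheory GRing.Theory Num.Theory.
Import numFieldNormedType.Exports.
Local Open Scope classical_set_scope.
Local Open Scope ring_scope.

(* R^d is modelled as row vectors 'rV[R]_d, with its canonical (product/sup-norm) topology. *)

Definition conv_hull (R : realType) (d : nat) (A : set 'rV[R]_d) : set 'rV[R]_d :=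
  [set x | exists (n : nat) (w : 'I_n -> R) (p : 'I_n -> 'rV[R]_d),
     [/\ (forall i, 0 <= w i), \sum_(i < n) w i = 1,
         (forall i, A (p i)) & x = \sum_(i < n) w i *: p i]].

Definition boundary (R : realType) (d : nat) (A : set 'rV[R]_d) : set 'rV[R]_d :=
  closure A `\` interior A.

Definition ray (R : realType) (d : nat) (x e : 'rV[R]_d) : set 'rV[R]_d :=
  [set x + t *: e | t in [set t : R | 0 <= t]].

From HB Require Import structures.
From mathcomp Require Import all_boot all_order all_algebra.
From mathcomp Require Import all_classical all_reals all_analysis.
From mathcomp Require Import ring.
Import Order.TTheory GRing.Theory Num.Theory.
Import numFieldNormedType.Exports.
Local Open Scope classical_set_scope.
Local Open Scope ring_scope.
Set Implicit Arguments. Unset Strict Implicit. Unset Printing Implicit Defensive.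

(* A point x of the closure of conv F is a limit of points of conv F, each a convex
   combination of d+1 points of F (Caratheodory); along an ultrafilter all weights and
   weighted points converge.  If the weighted points stay bounded, x = y + v with y in
   conv F and v a recession direction of cl conv F; otherwise, normalising by their total
   norm yields u <> 0 with both u and -u recession directions.  The rays from x in these
   directions lie in cl conv F but not in its boundary, so they meet conv F, and x lies on
   a segment between two points of conv F. *)


Section ConvexHull.
Variables (R : realType) (d : nat) (F : set 'rV[R]_d).
Local Notation C := (conv_hull F).

Definition conv_comb_of (n : nat) (x : 'rV[R]_d) :=
  exists (w : 'I_n -> R) (p : 'I_n -> 'rV[R]_d),
  [/\ (forall i, 0 <= w i), \sum_(i < n) w i = 1,
      (forall i, F (p i)) & x = \sum_(i < n) w i *: p i].

Lemma conv_comb_of0 x : ~ conv_comb_of 0 x.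
Proof. by case=> w [p [_ + _ _]]; rewrite big_ord0 => /eqP; rewrite eq_sym oner_eq0. Qed.

Lemma mem_conv_hull p : F p -> C p.
Proof.
move=> Fp; exists 1%N, (fun _ => 1), (fun _ => p).
by split; rewrite ?big_ord1 ?scale1r.
Qed.

Lemma conv_hull_segment a b t : C a -> C b -> 0 <= t <= 1 ->
  C ((1 - t) *: a + t *: b).
Proof.
move=> [n [w [p [w0 w1 pF ->]]]] [m [w' [p' [w0' w1' pF' ->]]]] /andP[t0 t1].
have splitl (i : 'I_n) : fintype.split (lshift m i) = inl i by exact: (unsplitK (inl i)).
have splitr (i : 'I_m) : fintype.split (rshift n i) = inr i by exact: (unsplitK (inr i)).
exists (n + m)%N.
exists (fun i => match fintype.split i with inl k => (1 - t) * w k | inr k => t * w' k end).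
exists (fun i => match fintype.split i with inl k => p k | inr k => p' k end).
split.
- by move=> i; case: (fintype.split i) => k; rewrite mulr_ge0 ?subr_ge0.
- rewrite big_split_ord /=; under eq_bigr do rewrite splitl.
  under [X in _ + X]eq_bigr do rewrite splitr.
  by rewrite -!mulr_sumr w1 w1' !mulr1 subrK.
- by move=> i; case: (fintype.split i).
- rewrite big_split_ord /= !scaler_sumr; congr (_ + _).
  + by apply: eq_bigr => i _; rewrite splitl scalerA.
  + by apply: eq_bigr => i _; rewrite splitr scalerA.
Qed.

Lemma conv_hull_between x u s t : 0 <= s -> 0 <= t ->
  C (x - s *: u) -> C (x + t *: u) -> C x.
Proof.
move=> s0 t0 Cs Ct.
have [st0|st0] := eqVneq (s + t) 0.
  have t_eq0 : t = 0 by apply/eqP; rewrite eq_le t0 andbT -st0 lerDr.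
  by rewrite t_eq0 scale0r addr0 in Ct.
have stp : 0 < s + t by rewrite lt_def st0 addr_ge0.
have l01 : 0 <= s / (s + t) <= 1.
  by rewrite divr_ge0 ?addr_ge0 //= ler_pdivrMr // mul1r lerDl.
suff -> : x = (1 - s / (s + t)) *: (x - s *: u) + (s / (s + t)) *: (x + t *: u).
  exact: conv_hull_segment.
rewrite !scalerDr scalerN !scalerA addrACA -scalerDl subrK scale1r -scaleNr -scalerDl.
suff -> : - ((1 - s / (s + t)) * s) + s / (s + t) * t = 0 by rewrite scale0r addr0.
by field.
Qed.

Lemma conv_comb_ofS n x : conv_comb_of n x -> conv_comb_of n.+1 x.
Proof.
case: n => [/conv_comb_of0 //|n] [w [p [w0 w1 pF ->]]].
exists (fun i : 'I_n.+2 => if (i < n.+1)%N then w (inord i) else 0).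
exists (fun i : 'I_n.+2 => if (i < n.+1)%N then p (inord i) else p ord0).
split.
- by move=> i; case: ifP.
- rewrite big_ord_recr /= ltnn addr0.
  by under eq_bigr do rewrite ltn_ord inord_val.
- by move=> i; case: ifP.
- symmetry; rewrite big_ord_recr /= ltnn scale0r addr0.
  by under eq_bigr do rewrite ltn_ord inord_val.
Qed.

Lemma conv_comb_of_widen n m x : (n <= m)%N -> conv_comb_of n x -> conv_comb_of m x.
Proof.
elim: m => [|m IH]; first by rewrite leqn0 => /eqP ->.
by rewrite leq_eqVlt ltnS => /orP[/eqP -> //| /IH nx /nx/conv_comb_ofS].
Qed.

Lemma affine_dependence n (p : 'I_n -> 'rV[R]_d) : (d.+1 < n)%N ->
  exists2 m : 'I_n -> R, (exists i, 0 < m i) &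
    \sum_i m i *: p i = 0 /\ \sum_i m i = 0.
Proof.
move=> dn; pose M : 'M[R]_(n, d + 1) := row_mx (\matrix_i p i) (const_mx 1).
have ker_neq0 : kermx M != 0.
  rewrite -mxrank_eq0 mxrank_ker subn_eq0 -ltnNge.
  by apply: leq_ltn_trans (rank_leq_col M) _; rewrite addn1.
have [k mu_neq0] : exists k, row k (kermx M) != 0.
  apply/existsP; apply: contraNT ker_neq0 => /existsPn H.
  by apply/eqP/row_matrixP => i; rewrite row0; apply/eqP/negbNE/H.
set mu := row k (kermx M) in mu_neq0.
have := congr1 (row k) (mulmx_ker M); rewrite row_mul row0 mul_mx_row => /eqP.
rewrite row_mx_eq0 => /andP[/eqP mP /eqP m1].
have msum : \sum_i mu 0 i *: p i = 0.
  by rewrite -[RHS]mP mulmx_sum_row; apply: eq_bigr => i _; rewrite rowK.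
have msum1 : \sum_i mu 0 i = 0.
  have e := congr1 (fun A : 'M[R]_(1, 1) => A 0 0) m1; rewrite !mxE /= in e.
  by rewrite -[RHS]e; apply: eq_bigr => i _; rewrite [const_mx 1 i 0]mxE mulr1.
exists (mu 0) => //; apply: contrapT => /forallNP mu_le0.
move/negP: mu_neq0; apply; apply/eqP/rowP => i; rewrite [RHS]mxE.
have mu_ge0 j : predT j -> 0 <= - mu 0 j.
  by rewrite oppr_ge0 leNgt => _; apply/negP/mu_le0.
have sum_opp : \sum_(j | predT j) - mu 0 j = 0 by rewrite sumrN msum1 oppr0.
by apply/eqP; rewrite -oppr_eq0 (psumr_eq0P mu_ge0 sum_opp).
Qed.

(* The weights are moved along the affine dependence until the first one vanishes. *)
Lemma conv_comb_of_reduce n x : (d.+1 < n.+1)%N ->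
  conv_comb_of n.+1 x -> conv_comb_of n x.
Proof.
move=> dn [w [p [w0 w1 pF ->]]].
have [m [i0 mi0] [msum msum1]] := affine_dependence p dn.
have [k0 mk kmin] := @arg_minP _ _ _ i0 (fun i => 0 < m i) (fun i => w i / m i) mi0.
set th := w k0 / m k0.
pose w' i := w i - th * m i.
have w'0 i : 0 <= w' i.
  rewrite /w' subr_ge0; have [mi|mi] := ltP 0 (m i).
    by rewrite -ler_pdivlMr //; exact: kmin.
  by apply: le_trans (w0 i); rewrite mulr_ge0_le0 // divr_ge0 // ltW.
have w'k : w' k0 = 0 by rewrite /w' /th divfK ?subrr // gt_eqF.
have sw' : \sum_i w' i = 1 by rewrite /w' sumrB -mulr_sumr msum1 mulr0 subr0.
have sx : \sum_i w' i *: p i = \sum_i w i *: p i.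
  rewrite /w'; under eq_bigr do rewrite scalerBl -scalerA.
  by rewrite sumrB -scaler_sumr msum scaler0 subr0.
exists (fun i => w' (lift k0 i)), (fun i => p (lift k0 i)); split => //.
- by rewrite -sw' (bigD1_ord k0) //= w'k add0r.
- by rewrite -sx (bigD1_ord k0) //= w'k scale0r add0r.
Qed.

Lemma caratheodory x : C x -> conv_comb_of d.+1 x.
Proof.
case=> n; elim: n => [/conv_comb_of0 //|n IH nx].
have [nd|dn] := leqP n.+1 d.+1; first exact: conv_comb_of_widen nx.
exact/IH/conv_comb_of_reduce.
Qed.

End ConvexHull.

Lemma ultra_cvg_compact {T : Type} (U : set_system T) {X : topologicalType}
    (f : T -> X) (A : set X) :
  UltraFilter U -> compact A -> U (f @^-1` A) -> exists2 l, A l & f @ U --> l.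
Proof.
move=> UU cA UA; have PU : ProperFilter U := ultra_proper.
have [l [Al cl]] := cA (f @ U) _ UA.
exists l => // B nB; have [//|UnB] := in_ultra_setVsetC (f @^-1` B) UU.
by have [z []] := cl (~` B) B UnB nB.
Qed.

Lemma cvg_sum (R : realType) {T : Type} (U : set_system T) {FU : Filter U}
    {V : normedModType R} (I : Type) (r : seq I) (P : pred I)
    (f : I -> T -> V) (l : I -> V) :
  (forall i, f i @ U --> l i) ->
  (fun j => \sum_(i <- r | P i) f i j) @ U --> \sum_(i <- r | P i) l i.
Proof.
move=> fl; elim: r => [|a r IH].
  by under eq_fun do rewrite big_nil; rewrite big_nil; exact: cvg_cst.
under eq_fun do rewrite big_cons; rewrite big_cons.
by case: (P a) => //; exact: cvgD.
Qed.

Lemma ler_sum_term (R : numDomainType) (I : finType) (f : I -> R) i :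
  (forall k, 0 <= f k) -> f i <= \sum_k f k.
Proof. by move=> f0; rewrite (bigD1 i) //= lerDl sumr_ge0. Qed.

Lemma norm_le_compact (R : realType) n (M : R) :
  compact [set v : 'rV[R]_n | `|v| <= M].
Proof.
apply: bounded_closed_compact.
  apply: filterS (nbhs_pinfty_ge (num_real M)) => M' MM' v /= vM.
  exact: le_trans vM MM'.
have -> : [set v : 'rV[R]_n | `|v| <= M] = (@Num.norm _ _) @^-1` [set r : R | r <= M] by [].
by apply: preimage_closed; [move=> v _; exact: norm_continuous | exact: closed_le].
Qed.

Section Recession.
Variables (R : realType) (d : nat).
Implicit Types (A : set 'rV[R]_d) (u v x : 'rV[R]_d).

Definition recession_dir A v :=
  forall y, A y -> forall t, 0 <= t -> A (y + t *: v).

Lemma recession_dir0 A : recession_dir A 0.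
Proof. by move=> y Ay t _; rewrite scaler0 addr0. Qed.

Lemma recession_dirD A u v :
  recession_dir A u -> recession_dir A v -> recession_dir A (u + v).
Proof. by move=> ru rv y Ay t t0; rewrite scalerDr addrA; apply: rv => //; exact: ru. Qed.

Lemma recession_dir_sum A (I : Type) (r : seq I) (P : pred I) (v : I -> 'rV[R]_d) :
  (forall i, P i -> recession_dir A (v i)) ->
  recession_dir A (\sum_(i <- r | P i) v i).
Proof.
by move=> rv; apply: big_ind => //; [exact: recession_dir0 | exact: recession_dirD].
Qed.

Lemma recession_dir_closure A v :
  (forall y, A y -> forall t, 0 <= t -> closure A (y + t *: v)) ->
  recession_dir (closure A) v.
Proof.
move=> Av y Ay t t0.
have PF : ProperFilter (within A (nbhs y)) by apply: within_nbhs_proper.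
apply: (@closed_cvg _ _ (within A (nbhs y)) _ (fun z => z + t *: v) _ (@closed_closure _ A)).
  by apply: filterS (withinT _ _) => z Az; exact: Av.
by apply: cvgD; [exact: cvg_within | exact: cvg_cst].
Qed.

Lemma ray_meets A x v : v != 0 -> ~ ray x v `<=` boundary A ->
  closure A x -> recession_dir (closure A) v -> exists2 t, 0 <= t & A (x + t *: v).
Proof.
move=> v0 not_bd clAx rv; apply: contrapT => noA; apply: not_bd => _ [t t0 <-].
by split; [exact: rv | move=> /interior_subset ?; apply: noA; exists t].
Qed.

End Recession.

Lemma recession_dir_cvg_conv_hull (R : realType) (d : nat) (F : set 'rV[R]_d)
    {T : Type} (U : set_system T) {PU : ProperFilter U}
    (a : T -> R) (p : T -> 'rV[R]_d) z :
  (\forall j \near U, 0 <= a j /\ conv_hull F (p j)) -> a @ U --> 0 ->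
  (fun j => a j *: p j) @ U --> z -> recession_dir (closure (conv_hull F)) z.
Proof.
move=> near_ap a0 apz; apply: recession_dir_closure => y Cy t t0.
have ta0 : (fun j => t * a j) @ U --> 0.
  by have := cvgM (cvg_cst t) a0; rewrite mulr0; apply.
have ta1 : \forall j \near U, `|t * a j| <= 1 by apply: cvgr0_norm_le.
(* [y + t z] is the limit of the points [(1 - t a_j) y + t a_j p_j] of the hull. *)
apply: (@closed_cvg _ _ U _ (fun j => (1 - t * a j) *: y + (t * a j) *: p j)
  _ (@closed_closure _ _)).
  apply: filterS2 near_ap ta1 => j [aj0 Cp] taj1; apply: subset_closure.
  apply: conv_hull_segment => //; rewrite mulr_ge0 //=.
  by apply: le_trans taj1; rewrite real_ler_norm // ger0_real // mulr_ge0.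
have -> : (fun j => (1 - t * a j) *: y + (t * a j) *: p j) =
          (fun j => y - (t * a j) *: y + t *: (a j *: p j)).
  by apply/funext => j; rewrite scalerBl scale1r scalerA.
rewrite -[X in X + _](subr0 y) -(scale0r y).
apply: cvgD; last exact: cvgZ (cvg_cst t) apz.
by apply: cvgB; [exact: cvg_cst | exact: cvgZ ta0 (cvg_cst y)].
Qed.

Section LimitOfConvexCombinations.
Variables (R : realType) (d : nat) (F : set 'rV[R]_d).
Hypothesis closedF : closed F.
Local Notation C := (conv_hull F).
Variables (T : Type) (U : set_system T) (n : nat).
Variables (w : T -> 'I_n -> R) (p : T -> 'I_n -> 'rV[R]_d) (x : 'rV[R]_d).
Hypothesis ultraU : UltraFilter U.
Hypothesis near_conv : \forall j \near U,
  [/\ forall i, 0 <= w j i, \sum_i w j i = 1 & forall i, F (p j i)].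
Hypothesis cvg_comb : (fun j => \sum_i w j i *: p j i) @ U --> x.

Let properU : ProperFilter U := ultra_proper.
#[local] Existing Instance properU.
Let mass j := \sum_i `|w j i *: p j i|.

Lemma cvg_weight i : exists l : R, 0 <= l /\ w^~ i @ U --> l.
Proof.
have : U ((w^~ i) @^-1` `[0, 1]).
  apply: filterS near_conv => j [w0 w1 _] /=; rewrite in_itv /= w0 -w1.
  exact: ler_sum_term.
case/(ultra_cvg_compact ultraU (@segment_compact R 0 1)) => l.
by rewrite /= in_itv => /andP[l0 _] wl; exists l.
Qed.

(* Terms of positive limit weight converge, unweighted, to points of the closed set F;
   the others to recession directions. *)
Lemma cvg_conv_comb_bounded M : (\forall j \near U, mass j <= M) ->
  exists y v, [/\ C y, recession_dir (closure C) v & x = y + v].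
Proof.
move=> mass_le; have [wl wlP] := choice cvg_weight.
have z_cvg i : exists l : 'rV[R]_d, (fun j => w j i *: p j i) @ U --> l.
  have : U ((fun j => w j i *: p j i) @^-1` [set v | `|v| <= M]).
    apply: filterS mass_le => j /= mj; apply: le_trans mj.
    by rewrite /mass; apply: ler_sum_term.
  by case/(ultra_cvg_compact ultraU (@norm_le_compact _ _ M)) => l _; exists l.
have [zl zl_cvg] := choice z_cvg.
have x_eq : x = \sum_i zl i.
  exact: cvg_unique cvg_comb (cvg_sum zl_cvg).
have wl_sum : \sum_i wl i = 1.
  have sum_w1 : (fun j => \sum_i w j i) @ U --> (1 : R).
    by apply: cvg_near_cst; apply: filterS near_conv => j [].
  exact: cvg_unique (cvg_sum (fun i => (wlP i).2)) sum_w1.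
have [j0 [_ _ Fp0]] := filter_ex near_conv.
pose q i := if wl i == 0 then p j0 i else (wl i)^-1 *: zl i.
have Fq i : F (q i).
  rewrite /q; case: eqP => [//|/eqP wl_neq0].
  have w_neq0 : \forall j \near U, w j i != 0.
    have wl_gt0 : 0 < `|wl i| by rewrite normr_gt0.
    apply: filterS (cvgr_dist_lt _ _ (wlP i).2 _ wl_gt0) => j.
    by apply: contraTneq => ->; rewrite subr0 ltxx.
  apply: (closed_cvg F closedF _ _ (cvgZ (cvgV wl_neq0 (wlP i).2) (zl_cvg i))).
  apply: filterS2 w_neq0 near_conv => j wj0 [_ _ Fp].
  by rewrite scalerA mulVf // scale1r.
exists (\sum_i wl i *: q i), (\sum_(i | wl i == 0) zl i); split.
- by exists n, wl, q; split=> // i; case: (wlP i).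
- apply: recession_dir_sum => i /eqP wl0.
  apply: (recession_dir_cvg_conv_hull (a := w^~ i) (p := p^~ i)) (zl_cvg i).
    by apply: filterS near_conv => j [w0 _ Fp]; split; [exact: w0 | exact/mem_conv_hull].
  by rewrite -wl0; exact: (wlP i).2.
- rewrite x_eq (bigID (fun i => wl i == 0)) /= addrC; congr (_ + _).
  have null_terms : \sum_(i | wl i == 0) wl i *: q i = 0.
    by apply: big1 => i /eqP ->; rewrite scale0r.
  rewrite [RHS](bigID (fun i => wl i == 0)) /= null_terms add0r.
  apply: eq_bigr => i /negPf wl_neq0.
  by rewrite /q wl_neq0 scalerA mulfV ?scale1r // wl_neq0.
Qed.

(* Normalised by the mass, the terms converge to recession directions summing to 0,
   not all 0. *)
Lemma cvg_conv_comb_unbounded : (forall M, \forall j \near U, M < mass j) ->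
  exists2 u, u != 0 & recession_dir (closure C) u /\ recession_dir (closure C) (- u).
Proof.
move=> mass_gt; have [wl wlP] := choice cvg_weight.
have inv_mass0 : (fun j => (mass j)^-1) @ U --> 0.
  apply/cvgr0Pnorm_lt => e e0; apply: filterS (mass_gt e^-1) => j ej.
  have mj0 : 0 < mass j by apply: lt_trans ej; rewrite invr_gt0.
  by rewrite ger0_norm ?invr_ge0 ?(ltW mj0) // invf_plt ?posrE.
pose y j i := (mass j)^-1 *: (w j i *: p j i).
have y_cvg i : exists l : 'rV[R]_d, y^~ i @ U --> l.
  have : U (y^~ i @^-1` [set v | `|v| <= 1]).
    apply: filterS (mass_gt 0) => j /= mj.
    rewrite normrZ ger0_norm ?invr_ge0 ?(ltW mj) // mulrC ler_pdivrMr // mul1r.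
    by rewrite /mass; apply: ler_sum_term.
  by case/(ultra_cvg_compact ultraU (@norm_le_compact _ _ 1)) => l _; exists l.
have [u u_cvg] := choice y_cvg.
have u_norm1 : \sum_i `|u i| = 1.
  have : (fun j => \sum_i `|y j i|) @ U --> (1 : R).
    apply: cvg_near_cst; apply: filterS (mass_gt 0) => j mj.
    under eq_bigr do rewrite normrZ ger0_norm ?invr_ge0 ?(ltW mj) //.
    by rewrite -mulr_sumr mulVf // gt_eqF.
  exact: cvg_unique (cvg_sum (fun i => cvg_norm (u_cvg i))).
have u_sum0 : \sum_i u i = 0.
  have : (fun j => \sum_i y j i) @ U --> (0 : 'rV[R]_d).
    have -> : (fun j => \sum_i y j i) = (fun j => (mass j)^-1 *: \sum_i w j i *: p j i).
      by apply/funext => j; rewrite scaler_sumr.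
    by have := cvgZ inv_mass0 cvg_comb; rewrite scale0r; apply.
  exact: cvg_unique (cvg_sum u_cvg).
have [i1 u_neq0] : exists i, u i != 0.
  apply: contrapT => no_neq0; move: u_norm1; rewrite big1 => [/esym/eqP|i _].
    by rewrite oner_eq0.
  by apply/eqP; rewrite normr_eq0; apply/negPn/negP => ui_neq0; apply: no_neq0; exists i.
have rec_u i : recession_dir (closure C) (u i).
  have near_ap : \forall j \near U, 0 <= w j i * (mass j)^-1 /\ C (p j i).
    apply: filterS near_conv => j [w0 _ Fp].
    by split; [rewrite mulr_ge0 // invr_ge0 sumr_ge0 | exact/mem_conv_hull].
  have a0 : (fun j => w j i * (mass j)^-1) @ U --> 0.
    by have := cvgM (wlP i).2 inv_mass0; rewrite mulr0; apply.
  apply: (recession_dir_cvg_conv_hull near_ap a0).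
  by under eq_fun do rewrite mulrC -scalerA; exact: u_cvg.
exists (u i1) => //; split=> //.
have -> : - u i1 = \sum_(i | i != i1) u i.
  by move/eqP: u_sum0; rewrite (bigD1 i1) //= addr_eq0 => /eqP ->; rewrite opprK.
exact: recession_dir_sum.
Qed.

Lemma cvg_conv_comb_decomposition :
  (exists y v, [/\ C y, recession_dir (closure C) v & x = y + v]) \/
  (exists2 u, u != 0 & recession_dir (closure C) u /\ recession_dir (closure C) (- u)).
Proof.
have [[M mass_le]|unbounded] := pselect (exists M, \forall j \near U, mass j <= M).
  by left; exact: cvg_conv_comb_bounded mass_le.
right; apply: cvg_conv_comb_unbounded => M.
have [//|mass_le] := in_ultra_setVsetC [set j | M < mass j] ultraU.
by exfalso; apply: unbounded; exists M; apply: filterS mass_le => j /negP; rewrite -leNgt.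
Qed.

End LimitOfConvexCombinations.

Lemma closure_conv_hull_decomposition (R : realType) (d : nat) (F : set 'rV[R]_d) x :
  closed F -> closure (conv_hull F) x ->
  let K := closure (conv_hull F) in
  (exists y v, [/\ conv_hull F y, recession_dir K v & x = y + v]) \/
  (exists2 u, u != 0 & recession_dir K u /\ recession_dir K (- u)).
Proof.
move=> closedF clCx; set C := conv_hull F.
have rep j : exists wp : ('I_d.+1 -> R) * ('I_d.+1 -> 'rV[R]_d), C j ->
    [/\ forall i, 0 <= wp.1 i, \sum_i wp.1 i = 1, (forall i, F (wp.2 i))
      & j = \sum_i wp.1 i *: wp.2 i].
  have [/caratheodory [w [p wp]]|notC] := pselect (C j).
    by exists (w, p); move=> _.
  by exists (0, 0); move=> /notC.
have [wp wpP] := choice rep.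
have [U [ultraU finer]] : exists U, UltraFilter U /\ within C (nbhs x) `<=` U.
  by apply: ultraFilterLemma; exact: within_nbhs_proper.
have UC : U C by apply: finer; exact: withinT.
have Ux : U --> x by move=> B xB; apply: finer; apply: filterS xB => y By _.
apply: (cvg_conv_comb_decomposition closedF ultraU (w := fun j => (wp j).1)
  (p := fun j => (wp j).2)); first by apply: filterS UC => j /wpP[].
apply: cvg_trans Ux; apply: near_eq_cvg.
by apply: filterS UC => j /wpP[_ _ _ <-].
Qed.

Theorem mainTheorem4 (R : realType) (d : nat) (F : set 'rV[R]_d) :
  closed F ->
  (forall x e : 'rV[R]_d, e != 0 -> ~ (ray x e `<=` boundary (conv_hull F))) ->
  closure (conv_hull F) = conv_hull F.
Proof.
move=> closedF no_ray; apply/seteqP; split; last exact: subset_closure.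
move=> x clCx.
have ray_meets_C v : v != 0 -> recession_dir (closure (conv_hull F)) v ->
    exists2 t, 0 <= t & conv_hull F (x + t *: v).
  by move=> v0; exact: ray_meets v0 (no_ray x v v0) clCx.
have [[y [v [Cy rec_v x_eq]]]|[u u0 [rec_u rec_Nu]]] :=
  closure_conv_hull_decomposition closedF clCx.
- have [v0|v_neq0] := eqVneq v 0; first by rewrite x_eq v0 addr0.
  have [t t0 Ct] := ray_meets_C v v_neq0 rec_v.
  apply: (conv_hull_between (u := v) ler01 t0 _ Ct).
  by rewrite scale1r x_eq addrK.
- have [t t0 Ct] := ray_meets_C u u0 rec_u.
  have Nu_neq0 : - u != 0 by rewrite oppr_eq0.
  have [s s0 Cs] := ray_meets_C (- u) Nu_neq0 rec_Nu.
  by apply: (conv_hull_between (u := u) s0 t0 _ Ct); rewrite -scalerN.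
Qed.
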